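(* Let $(E,\mathcal L)$ be a simple COM with tope set $\mathcal T$ and tope graph $G$. Then $$\mathcal L=\{X(G')\mid G'\text{ antipodal subgraph of }G\}=\{X(G')\mid G'\text{ antipodal gated subgraph of }G\}=\mathcal L(G),$$ where $\mathcal L(G)=\{X\in\{+,-,0\}^E\mid X\circ(-Y)\in\mathcal T\text{ for all }Y\in\mathcal T\}$. In particular, in the tope graph of a COM all antipodal subgraphs are gated.
   Context: Sign vectors: $E$ finite nonempty, $\emptyset\ne\mathcal L\subseteq\{+,-,0\}^E$; $S(X,Y)=\{e:X_eY_e=-\}$; $(X\circ Y)_e=X_e$ if $X_e\ne0$ else $Y_e$; $(-X)_e=-X_e$. (FS): $X\circ-Y\in\mathcal L$ for all $X,Y\in\mathcal L$. (SE): for $X,Y\in\mathcal L$, $e\in S(X,Y)$ there is $Z\in\mathcal L$ with $Z_e=0$ and $Z_f=(X\circ Y)_f$ for $f\notin S(X,Y)$. A COM satisfies (FS) and (SE). Simple: each coordinate takes all values $+,-,0$ on $\mathcal L$, and for $e\neq f$ there are $X,Y\in\mathcal L$ with $\{X_eX_f,Y_eY_f\}=\{+,-\}$. Topes $\mathcal T=\mathcal L\cap\{+,-\}^E$; the tope graph is the subgraph of the hypercube on $\{+,-\}^E$ induced by $\mathcal T$. For a simple COM the tope graph is an isometric subgraph (partial cube) whose $\Theta$-classes are indexed by $E$: the class of $e$ consists of the edges joining topes that differ exactly in coordinate $e$, and its halfspaces are the topes with $e$-coordinate $+$ resp. $-$. For a convex subgraph $G'$ of $G$, $X(G')\in\{+,-,0\}^E$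 has $X(G')_e=+$ (resp. $-$) if all vertices of $G'$ have $e$-coordinate $+$ (resp. $-$), and $0$ otherwise. A subgraph is convex if it contains all shortest paths between its vertices; $\mathrm{conv}(S)$ is the smallest convex subgraph containing $S$. For a subgraph $H$ and $x\in H$, $-_Hx\in H$ with $\mathrm{conv}(x,-_Hx)=H$ is the antipode of $x$ in $H$; $H$ is antipodal if every vertex has an antipode in $H$. $H$ is gated if for every vertex $x$ of $G$ there is $x'\in H$ such that for every $y\in H$ some shortest $x$–$y$ path passes through $x'$. *)

From mathcomp Require Import all_boot.
Set Implicit Arguments. Unset Strict Implicit. Unset Printing Implicit Defensive.

(* Signs: Some true = +, Some false = -, None = 0. *)
Definition sign := option bool.
Definition sPlus : sign := Some true.
Definition sMinus : sign := Some false.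
Definition sZero : sign := None.

Section COM.
Variable E : finType.

Definition svec := {ffun E -> sign}.

Definition sneg (s : sign) : sign := omap negb s.
Definition sprod (s t : sign) : sign :=
  match s, t with Some a, Some b => Some (a == b) | _, _ => None end.

Definition sep (X Y : svec) : {set E} := [set e | sprod (X e) (Y e) == sMinus].
Definition comp (X Y : svec) : svec :=
  [ffun e => if X e != sZero then X e else Y e].
Definition vneg (X : svec) : svec := [ffun e => sneg (X e)].

Definition FS (L : {set svec}) : Prop :=
  forall X Y, X \in L -> Y \in L -> comp X (vneg Y) \in L.

Definition SE (L : {set svec}) : Prop :=
  forall X Y e, X \in L -> Y \in L -> e \in sep X Y ->
    exists2 Z, Z \in L & Z e = sZero /\
      forall f, f \notin sep X Y -> Z f = comp X Y f.

Definition COM (L : {set svec}) : Prop := L != set0 /\ FS L /\ SE L.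

Definition simple (L : {set svec}) : Prop :=
  (forall e (s : sign), exists2 X, X \in L & X e = s) /\
  (forall e f, e != f -> exists X, exists Y,
     [/\ X \in L, Y \in L,
         sprod (X e) (X f) != sprod (Y e) (Y f),
         sprod (X e) (X f) != sZero & sprod (Y e) (Y f) != sZero]).

Definition topes (L : {set svec}) : {set svec} :=
  [set X in L | [forall e, X e != sZero]].

Definition tadj (T : {set svec}) : rel svec :=
  fun x y => [&& x \in T, y \in T & #|[set e | x e != y e]| == 1].

Definition shortest (T : {set svec}) (x : svec) (p : seq svec) : Prop :=
  path (tadj T) x p /\
  forall q, path (tadj T) x q -> last x q = last x p -> size p <= size q.

(* subgraphs are given by their vertex sets (convex subgraphs are induced) *)
Definition convex (T H : {set svec}) : Prop :=
  H \subset T /\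
  forall x p, x \in H -> last x p \in H -> shortest T x p -> all (mem H) p.

Definition is_conv (T S H : {set svec}) : Prop :=
  [/\ convex T H, S \subset H &
      forall H', convex T H' -> S \subset H' -> H \subset H'].

Definition antipode (T H : {set svec}) (x y : svec) : Prop :=
  y \in H /\ is_conv T [set x; y] H.

Definition antipodal (T H : {set svec}) : Prop :=
  [/\ H \subset T, H != set0 &
      forall x, x \in H -> exists y, antipode T H x y].

Definition gated (T H : {set svec}) : Prop :=
  H \subset T /\
  forall x, x \in T -> exists2 x', x' \in H &
    forall y, y \in H -> exists p, [/\ shortest T x p, last x p = y & x' \in x :: p].

Definition XG (H : {set svec}) : svec :=
  [ffun e => if [forall x in H, x e == sPlus] then sPlus
             else if [forall x in H, x e == sMinus] then sMinus else sZero].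

Definition LG (T : {set svec}) : {set svec} :=
  [set X | [forall Y in T, comp X (vneg Y) \in T]].

End COM.

(* The tope graph is an isometric subgraph of the hypercube: eliminating
   between two topes and then using simplicity yields a covector with a single zero below
   the first tope, i.e. a neighbour one step closer to the second.  Hence, for a covector
   [X], the topes above [X] form a convex set that is gated (the gate of [t] is [X o t])
   and antipodal (the antipode of [t] is [X o -t]), with [X(G') = X].  Conversely, in an
   antipodal subgraph [H] two antipodes agreeing at [e] lie in the convex halfspace of
   [e], which therefore contains [H]; so [H] is the set of topes above [X(H)] and the
   antipode of [t] is [X(H) o -t].  Finally a sign vector [X] with a tope above it is a
   covector as soon as all its reflections [X o -t] are: among covectors above [X] take
   one with the most zeros and remove any zero outside [X] by elimination.  This also
   gives [L = L(G)]. *)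

From Pilot Require Import Defs.
From mathcomp Require Import all_boot zify.
Set Implicit Arguments. Unset Strict Implicit. Unset Printing Implicit Defensive.

(* [comp] alone would denote function composition from ssrfun. *)
Local Notation vcomp := Defs.comp.

Lemma snegK : involutive sneg.
Proof. by case=> [[]|]. Qed.

Lemma sneg_neq0 (s : sign) : s != sZero -> sneg s != sZero.
Proof. by case: s. Qed.

Lemma sneg_neq (s : sign) : s != sZero -> sneg s != s.
Proof. by case: s => [[]|]. Qed.

Lemma neq_sneg (s t : sign) : s != sZero -> t != sZero -> s != t -> t = sneg s.
Proof. by case: s => [[]|] //; case: t => [[]|]. Qed.

Lemma sprod_minus (s t : sign) :
  s != sZero -> t != sZero -> (sprod s t == sMinus) = (s != t).
Proof. by case: s => [[]|] //; case: t => [[]|]. Qed.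

Lemma sprod_neq0 (s t : sign) : sprod s t != sZero -> s != sZero /\ t != sZero.
Proof. by case: s => [[]|] //; case: t => [[]|]. Qed.

Lemma sprod_neq (s1 s2 t1 t2 : sign) :
  s1 != sZero -> s2 != sZero -> t1 != sZero -> t2 != sZero ->
  sprod t1 t2 != sprod s1 s2 -> (s1 != t1) && (s2 == t2) || (s1 == t1) && (s2 != t2).
Proof.
by case: s1 => [[]|] //; case: s2 => [[]|] //; case: t1 => [[]|] //; case: t2 => [[]|].
Qed.

Section SignVectors.
Variable E : finType.
Implicit Types (X Y Z V W x y z : svec E) (T H : {set svec E}).

Lemma vcompE X Y e : vcomp X Y e = if X e != sZero then X e else Y e.
Proof. by rewrite ffunE. Qed.

Lemma vnegE X e : vneg X e = sneg (X e).
Proof. by rewrite ffunE. Qed.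

Lemma vcomp_vneg_eq0 X W f :
  vcomp X (vneg W) f = sZero -> X f = sZero /\ W f = sZero.
Proof. by rewrite vcompE vnegE; case: (X f) => //; case: (W f). Qed.

Lemma sepE X Y e : (e \in sep X Y) = (sprod (X e) (Y e) == sMinus).
Proof. by rewrite inE. Qed.

Lemma sep_eq X Y e : X e = Y e -> e \notin sep X Y.
Proof. by rewrite sepE => ->; case: (Y e) => [[]|]. Qed.

Lemma sep_sneg X Y e : X e != sZero -> Y e = sneg (X e) -> e \in sep X Y.
Proof. by rewrite sepE => + ->; case: (X e) => [[]|]. Qed.

Definition zeros X : {set E} := [set e | X e == sZero].

Lemma zerosE X e : (e \in zeros X) = (X e == sZero).
Proof. by rewrite inE. Qed.

Lemma card_zeros_lt V W g :
  (forall f, V f = sZero -> W f = sZero) -> W g = sZero -> V g != sZero ->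
  #|zeros V| < #|zeros W|.
Proof.
move=> VW Wg Vg; apply: proper_card; apply/properP; split.
  by apply/subsetP => f; rewrite !zerosE => /eqP /VW ->.
by exists g; rewrite zerosE ?Wg.
Qed.

Definition vle X Y := [forall e, (X e != sZero) ==> (Y e == X e)].

Lemma vleP X Y : reflect (forall e, X e != sZero -> Y e = X e) (vle X Y).
Proof.
apply: (iffP forallP) => [H e /(implyP (H e)) /eqP //|H e].
by apply/implyP => /H ->.
Qed.

Lemma vle_zero X Y e : vle X Y -> Y e = sZero -> X e = sZero.
Proof.
move/vleP => XY Ye; case: (eqVneq (X e) sZero) => [//|Xe].
by rewrite -(XY e Xe) Ye.
Qed.

Lemma vle_trans X Y Z : vle X Y -> vle Y Z -> vle X Z.
Proof.
move=> /vleP XY /vleP YZ; apply/vleP => e Xe.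
by rewrite YZ XY // (XY e Xe).
Qed.

Lemma vle_vcomp X Y : vle X (vcomp X Y).
Proof. by apply/vleP => e Xe; rewrite vcompE Xe. Qed.

Lemma vle_vcomp2 X Y Z : vle Y Z -> vle (vcomp X Y) (vcomp X Z).
Proof.
move/vleP => YZ; apply/vleP => e; rewrite !vcompE.
by case: ifP => // _ /YZ.
Qed.

Lemma vle_vneg X Y : vle X Y -> vle (vneg X) (vneg Y).
Proof.
move/vleP => XY; apply/vleP => e; rewrite !vnegE.
by case Xe: (X e) => [b|] // _; rewrite XY Xe.
Qed.

Definition dset x y : {set E} := [set e | x e != y e].

Lemma dsetE x y e : (e \in dset x y) = (x e != y e).
Proof. by rewrite inE. Qed.

Lemma dset_id x : dset x x = set0.
Proof. by apply/setP => e; rewrite !inE eqxx. Qed.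

Lemma dset_tri x y z : dset x z \subset dset x y :|: dset y z.
Proof.
apply/subsetP => e; rewrite !inE; by case: (eqVneq (x e) (y e)) => [->|].
Qed.

Lemma card_dset_tri x y z : #|dset x z| <= #|dset x y| + #|dset y z|.
Proof. exact: leq_trans (subset_leq_card (dset_tri x y z)) (leq_card_setU _ _). Qed.

Lemma dset_neighbor x y z e :
  x e != sZero -> y e != sZero -> z e != sZero ->
  dset x y = [set e] -> e \in dset x z -> dset y z = dset x z :\ e.
Proof.
move=> xe ye ze xy exz; apply/setP => f; rewrite in_setD1 !dsetE.
case: (eqVneq f e) => [->|fe] /=.
  have ye' : x e != y e by rewrite -dsetE xy set11.
  rewrite dsetE in exz.
  by rewrite (neq_sneg xe ye ye') -(neq_sneg xe ze exz) eqxx.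
have : f \notin dset x y by rewrite xy in_set1.
by rewrite dsetE negbK => /eqP <-.
Qed.

Lemma tadj_path_mem T x p y : path (tadj T) x p -> y \in p -> y \in T.
Proof.
elim: p x => [|z p IH] x //=; case/andP => /and3P [_ zT _] zp.
by rewrite in_cons => /orP [/eqP ->|]; [| apply: IH zp].
Qed.

Lemma last_tadj_path T x p : x \in T -> path (tadj T) x p -> last x p \in T.
Proof.
move=> xT xp; have := mem_last x p; rewrite in_cons => /predU1P [-> //|].
exact: tadj_path_mem xp.
Qed.

Lemma size_tadj_path T x p : path (tadj T) x p -> #|dset x (last x p)| <= size p.
Proof.
elim: p x => [|y p IH] x /=; first by rewrite dset_id cards0.
case/andP => /and3P [_ _ /eqP xy] /IH yp.
by apply: leq_trans (card_dset_tri x y _) _; rewrite -/(dset x y) xy add1n.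
Qed.

Lemma card_dset_lt x y z e :
  x e = z e -> y e != x e -> #|dset x z| < #|dset x y| + #|dset y z|.
Proof.
move=> xz yx; have exy : e \in dset x y by rewrite dsetE eq_sym.
have eyz : e \in dset y z by rewrite dsetE -xz.
have sub : dset x z \subset (dset x y :|: dset y z) :\ e.
  apply/subsetP => f fxz; rewrite in_setD1 (subsetP (dset_tri x y z) _ fxz) andbT.
  by apply: contraTneq fxz => ->; rewrite dsetE xz eqxx.
have := subset_leq_card sub; have := cardsD1 e (dset x y :|: dset y z).
rewrite in_setU exy /=.
have := cardsUI (dset x y) (dset y z); have : 0 < #|dset x y :&: dset y z|.
  by apply/card_gt0P; exists e; rewrite in_setI exy.
by lia.
Qed.

Lemma card_dset_between x y z :
  (forall e, x e != sZero) -> (forall e, y e != sZero) -> (forall e, z e != sZero) ->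
  (forall e, x e = y e -> z e = x e) -> #|dset x z| + #|dset z y| <= #|dset x y|.
Proof.
move=> xf yf zf zxy.
have disj : dset x z :&: dset z y = set0.
  apply/setP => e; rewrite !inE; apply/negP => /andP [xz zy].
  have yx : y e = x e by rewrite (neq_sneg (zf e) (yf e) zy) (neq_sneg (xf e) (zf e) xz) snegK.
  by rewrite (zxy e (esym yx)) eqxx in xz.
have sub : dset x z :|: dset z y \subset dset x y.
  apply/subsetP => e; rewrite in_setU !dsetE.
  by case: (eqVneq (x e) (y e)) => [xy|//]; rewrite (zxy e xy) -xy !eqxx.
by rewrite -cardsUI disj cards0 addn0 subset_leq_card.
Qed.

Lemma tadj_path_between T x p y e :
  path (tadj T) x p -> size p <= #|dset x (last x p)| -> y \in p ->
  x e = last x p e -> y e = x e.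
Proof.
move=> xp pmin yp; move: xp pmin; case/path.splitP: yp => p1 p2 xp pmin.
rewrite last_cat last_rcons; set z := last y p2 => xz; apply/eqP/negPn/negP => yx.
move: xp pmin; rewrite cat_path last_cat !last_rcons size_cat size_rcons -/z.
case/andP=> /size_tadj_path + /size_tadj_path; rewrite last_rcons size_rcons -/z.
by have := card_dset_lt xz yx; lia.
Qed.

Lemma shortest_tadj T x p :
  path (tadj T) x p -> size p <= #|dset x (last x p)| -> shortest T x p.
Proof.
move=> xp pmin; split=> // q xq qp; apply: leq_trans pmin _.
by rewrite -qp; apply: size_tadj_path xq.
Qed.

Lemma XG_vle H t : t \in H -> vle (XG H) t.
Proof.
move=> tH; apply/vleP => e; rewrite ffunE.
case: ifP => [/forall_inP Hp _|_]; first by apply/eqP; apply: Hp.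
by case: ifP => [/forall_inP Hm _|//]; apply/eqP; apply: Hm.
Qed.

Lemma XG_const H t0 e : t0 \in H -> t0 e != sZero ->
  {in H, forall t : svec E, t e = t0 e} -> XG H e = t0 e.
Proof.
move=> t0H t0e Ht; case: (eqVneq (XG H e) sZero) => [XGe|XGe]; last first.
  by rewrite (vleP _ _ (XG_vle t0H) e XGe).
have all_t0 : [forall x in H, x e == t0 e] by apply/forall_inP => t /Ht ->.
move: XGe; rewrite ffunE; case: (t0 e) t0e all_t0 => [[]|] // _ all_t0.
  by rewrite [[forall _ in _, _]]all_t0.
by case: ifP => //; rewrite [[forall _ in _, _ == sMinus]]all_t0.
Qed.
End SignVectors.

Section Composition.
Variables (E : finType) (L : {set svec E}).
Hypothesis FS_L : FS L.
Implicit Types (X Y t : svec E).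

Lemma vcomp_mem X Y : X \in L -> Y \in L -> vcomp X Y \in L.
Proof.
move=> XL YL; have -> : vcomp X Y = vcomp X (vneg (vcomp X (vneg Y))).
  apply/ffunP => e; rewrite !(vcompE, vnegE).
  by case: (X e) => [b|] //=; rewrite snegK.
by apply: FS_L => //; apply: FS_L.
Qed.

Lemma topesP t : reflect (t \in L /\ forall e, t e != sZero) (t \in topes L).
Proof. by rewrite inE; apply: (iffP andP) => -[tL /forallP]. Qed.

Lemma topes_mem t : t \in topes L -> t \in L.
Proof. by case/topesP. Qed.

Lemma topes_full t : t \in topes L -> forall e, t e != sZero.
Proof. by case/topesP. Qed.

Lemma vcomp_topes X t : X \in L -> t \in topes L -> vcomp X t \in topes L.
Proof.
move=> XL /topesP [tL tf]; apply/topesP; split; first exact: vcomp_mem.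
by move=> e; rewrite vcompE; case: ifP.
Qed.

Lemma vcomp_vneg_topes X t : X \in L -> t \in topes L -> vcomp X (vneg t) \in topes L.
Proof.
move=> XL /topesP [tL tf]; apply/topesP; split; first exact: FS_L.
by move=> e; rewrite vcompE vnegE; case: ifP => // _; apply: sneg_neq0.
Qed.

(* A vector of [L] with the fewest zeros is a tope: composing it with a vector
   nonzero at one of its zeros would remove that zero. *)
Lemma topes_exist :
  L != set0 -> (forall e, exists2 X, X \in L & X e != sZero) -> topes L != set0.
Proof.
case/set0Pn=> X0 X0L nz0.
have [W WL Wmin] := arg_minnP (fun W => #|zeros W|) X0L.
apply/set0Pn; exists W; apply/topesP; split=> // e; apply/negP => /eqP We.
have [Y YL Ye] := nz0 e.
have := Wmin _ (vcomp_mem WL YL); rewrite leqNgt => /negP; apply.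
apply: (card_zeros_lt (g := e)) => // [f|]; rewrite vcompE.
  by case: eqP => // _; rewrite eqxx.
by rewrite We eqxx.
Qed.

Definition face X := [set t in topes L | vle X t].

Lemma faceP X t : reflect (t \in topes L /\ vle X t) (t \in face X).
Proof. exact: setIdP. Qed.

Lemma face_topes X t : t \in face X -> t \in topes L.
Proof. by case/faceP. Qed.

Lemma face_sub X : face X \subset topes L.
Proof. by apply/subsetP => t /face_topes. Qed.

Lemma face_eq X t e : t \in face X -> X e != sZero -> t e = X e.
Proof. by case/faceP => _ /vleP; apply. Qed.

Lemma vcomp_face X t : X \in L -> t \in topes L -> vcomp X t \in face X.
Proof. by move=> XL tT; apply/faceP; split; [apply: vcomp_topes | apply: vle_vcomp]. Qed.

Lemma vcomp_vneg_face X t : X \in L -> t \in topes L -> vcomp X (vneg t) \in face X.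
Proof. by move=> XL tT; apply/faceP; split; [apply: vcomp_vneg_topes | apply: vle_vcomp]. Qed.

End Composition.

Section Elimination.
Variables (E : finType) (L : {set svec E}).
Hypotheses (FS_L : FS L) (SE_L : SE L).
Implicit Types (X Y V W t : svec E).

Lemma elim_mem X Y g : X \in L -> Y \in L -> g \in sep X Y ->
  exists2 Z, Z \in L & Z g = sZero /\ forall f, X f = Y f -> Z f = X f.
Proof.
move=> XL YL g_sep; have [Z ZL [Zg ZXY]] := SE_L XL YL g_sep.
exists Z => //; split=> // f XYf.
by rewrite ZXY ?sep_eq // vcompE XYf; case: ifP.
Qed.

(* Among the vectors of [L] above [X] take one with the most zeros: at a coordinate
   outside the support of [X] where it is nonzero, the given [U] lets the elimination
   axiom produce a vector above [X] with strictly more zeros. *)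
Lemma mem_of_elim_above X :
  (exists2 V, V \in L & vle X V) ->
  (forall V g, V \in L -> vle X V -> X g = sZero -> V g != sZero ->
     exists2 U, U \in L &
       [/\ vle X U, U g = sneg (V g) & forall f, V f = sZero -> U f = sZero]) ->
  X \in L.
Proof.
case=> V0 V0L XV0 step.
have V0P : V0 \in [pred V | (V \in L) && vle X V] by apply/andP.
have [V /andP [VL XV] Vmax] := arg_maxnP (fun V => #|zeros V|) V0P.
suff XzV g : X g = sZero -> V g = sZero.
  suff -> : X = V by [].
  apply/ffunP => e; case: (eqVneq (X e) sZero) => [Xe|Xe]; first by rewrite Xe XzV.
  by rewrite (vleP _ _ XV e Xe).
move=> Xg; case: (eqVneq (V g) sZero) => // Vg; exfalso.
have [U UL [XU Ug Uz]] := step V g VL XV Xg Vg.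
have [V' V'L [V'g V'V]] := elim_mem VL UL (sep_sneg Vg Ug).
have XV' : vle X V'.
  by apply/vleP => e Xe; rewrite V'V (vleP _ _ XV e Xe) // (vleP _ _ XU e Xe).
have := Vmax V' (introT andP (conj V'L XV')); rewrite /= leqNgt => /negP; apply.
by apply: (card_zeros_lt (g := g)) => // f Vf; rewrite V'V // Uz.
Qed.

Section Reflection.
Variable X : svec E.
Hypothesis face_X : face L X != set0.
Hypothesis reflect_X : {in face L X, forall t, vcomp X (vneg t) \in L}.

Lemma vcomp_vneg_above W : W \in L -> vle X W -> vcomp X (vneg W) \in L.
Proof.
move=> WL; have [n] := ubnP #|zeros W|; elim: n => // n IH in W WL *.
rewrite ltnS => Wn XW; apply: mem_of_elim_above.
  have [t0 t0X] := set0Pn _ face_X; exists (vcomp X (vneg (vcomp W t0))).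
    apply: reflect_X; apply/faceP; split.
      exact: vcomp_topes (face_topes t0X).
    exact: vle_trans XW (vle_vcomp W t0).
  exact: vle_vcomp2 (vle_vneg (vle_vcomp W t0)).
move=> V g VL XWV /vcomp_vneg_eq0 [Xg Wg] Vg; exists (vcomp X (vneg (vcomp W V))).
- apply: IH; first exact: vcomp_mem.
    apply: leq_trans Wn; apply: (card_zeros_lt (g := g)) => // [f|].
      by rewrite vcompE; case: eqP => // _; rewrite eqxx.
    by rewrite vcompE Wg eqxx.
  exact: vle_trans XW (vle_vcomp W V).
split.
- exact: vle_vcomp2 (vle_vneg (vle_vcomp W V)).
- by rewrite vcompE vnegE vcompE Xg Wg.
- move=> f Vf; have [Xf Wf] := vcomp_vneg_eq0 (vle_zero XWV Vf).
  by rewrite vcompE vnegE vcompE Xf Wf Vf.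
Qed.

Lemma mem_of_face : X \in L.
Proof.
apply: mem_of_elim_above.
  by have [t /faceP [/topes_mem tL Xt]] := set0Pn _ face_X; exists t.
move=> V g VL XV Xg Vg; exists (vcomp X (vneg V)); first exact: vcomp_vneg_above.
split; first exact: vle_vcomp.
  by rewrite vcompE vnegE Xg.
by move=> f Vf; rewrite vcompE vnegE (vle_zero XV Vf) Vf.
Qed.

End Reflection.
End Elimination.

Section TopeGraph.
Variables (E : finType) (L : {set svec E}).
Hypotheses (FS_L : FS L) (SE_L : SE L) (simple_L : simple L).
Local Notation T := (topes L).
Implicit Types (X W a b c t u x y z : svec E).

Lemma vcomp_topesE a : a \in T -> forall Z e, vcomp a Z e = a e.
Proof. by move=> aT Z e; rewrite vcompE (topes_full aT). Qed.

(* Eliminating between [a] and [Z] at a separating coordinate keeps the agreement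
   outside [D] and strictly shrinks the separation set, until [Z] lies below [a]. *)
Lemma face_below_within a (D : {set E}) Z : a \in T -> Z \in L ->
  (forall f, f \notin D -> Z f = a f) -> zeros Z != set0 ->
  exists2 W, W \in L & [/\ vle W a, zeros W != set0 & zeros W \subset D].
Proof.
move=> aT; have aL := topes_mem aT.
have [n] := ubnP #|sep a Z|; elim: n => // n IH in Z *.
rewrite ltnS => Zn ZL Za Znz.
case: (eqVneq (sep a Z) set0) => [sep0|/set0Pn [g g_sep]].
  exists Z => //; split=> //.
    apply/vleP => f Zf; have : f \notin sep a Z by rewrite sep0 inE.
    by rewrite sepE sprod_minus ?(topes_full aT) // negbK => /eqP.
  apply/subsetP => f; rewrite zerosE; apply: contraTT => /Za ->.
  exact: topes_full aT f.
have [Z' Z'L [Z'g Z'a]] := SE_L aL ZL g_sep.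
have Z'aZ f : f \notin sep a Z -> Z' f = a f by move=> f_sep; rewrite Z'a ?(vcomp_topesE aT).
apply: IH Z'L _ _.
- apply: leq_trans Zn; apply: proper_card; apply/properP; split.
    by apply/subsetP => f; apply: contraTT => /Z'aZ f_a; rewrite sepE f_a; case: (a f) => [[]|].
  by exists g; rewrite // sepE Z'g; case: (a g).
- by move=> f fD; apply: Z'aZ; rewrite sep_eq ?Za.
- by apply/set0Pn; exists g; rewrite zerosE Z'g.
Qed.

Lemma face_below_dset a c : a \in T -> c \in T -> dset a c != set0 ->
  exists2 W, W \in L & [/\ vle W a, zeros W != set0 & zeros W \subset dset a c].
Proof.
move=> aT cT /set0Pn [e eac].
have sepE_ac f : (f \in sep a c) = (f \in dset a c).
  by rewrite sepE sprod_minus ?(topes_full aT) ?(topes_full cT) -?dsetE.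
have [Z ZL [Ze Za]] := SE_L (topes_mem aT) (topes_mem cT) (etrans (sepE_ac e) eac).
apply: (face_below_within aT ZL); last by apply/set0Pn; exists e; rewrite zerosE Ze.
by move=> f fac; rewrite Za ?(vcomp_topesE aT) ?sepE_ac.
Qed.

Lemma simple_flip (s : sign) e f : e != f ->
  exists2 Q, Q \in L & sprod (Q e) (Q f) != s /\ sprod (Q e) (Q f) != sZero.
Proof.
move=> ef; have [X [Y [XL YL XY X0 Y0]]] := simple_L.2 e f ef.
case: (eqVneq (sprod (X e) (X f)) s) => [Xs|Xs]; last by exists X.
by exists Y; rewrite // -Xs eq_sym.
Qed.

(* If [W] has two zeros [e] and [f], then for [Q] from [simple_flip] the tope
   [c := W o Q o a] differs from [a] in exactly one of [e], [f]; so [dset a c] is a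
   nonempty proper subset of the zeros of [W] and [face_below_dset] gives a smaller face. *)
Lemma face_one_zero a (D : {set E}) W : a \in T -> W \in L -> vle W a ->
  zeros W != set0 -> zeros W \subset D ->
  exists2 e, e \in D & exists2 W', W' \in L & vle W' a /\ zeros W' = [set e].
Proof.
move=> aT; have [n] := ubnP #|zeros W|; elim: n => // n IH in W *.
rewrite ltnS => Wn WL Wa Wnz WD.
case: (leqP #|zeros W| 1) => [W1|/card_gt1P [e [f [eW fW ef]]]].
  have /cards1P [e We] : #|zeros W| == 1 by rewrite eqn_leq W1 lt0n cards_eq0.
  by exists e; [apply: (subsetP WD); rewrite We set11 | exists W].
have [Q QL [Qa /sprod_neq0 [Qe Qf]]] := simple_flip (sprod (a e) (a f)) ef.
set c := vcomp W (vcomp Q a).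
have cT : c \in T by apply: vcomp_topes => //; apply: vcomp_topes.
have ce : c e = Q e by move: eW; rewrite zerosE /c !vcompE => /eqP ->; rewrite Qe.
have cf : c f = Q f by move: fW; rewrite zerosE /c !vcompE => /eqP ->; rewrite Qf.
have acW : dset a c \subset zeros W.
  apply/subsetP => g; rewrite dsetE zerosE; apply: contraR => Wg.
  by rewrite /c vcompE Wg (vleP _ _ Wa g Wg).
have := sprod_neq (topes_full aT e) (topes_full aT f) (topes_full cT e) (topes_full cT f).
rewrite ce cf => /(_ Qa) /orP ac_ef.
have [h hW hac] : exists2 h, h \in zeros W & h \notin dset a c.
  by case: ac_ef => /andP [ae af]; [exists f | exists e]; rewrite // dsetE ?ce ?cf ?af ?ae.
have ac : dset a c != set0.
  by apply/set0Pn; case: ac_ef => /andP [ae af]; [exists e | exists f]; rewrite dsetE ?ce ?cf ?ae ?af.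
have [W' W'L [W'a W'0 W'ac]] := face_below_dset aT cT ac.
apply: IH W'L W'a W'0 _.
  apply: leq_trans Wn; apply: leq_ltn_trans (subset_leq_card W'ac) _.
  by apply: proper_card; apply/properP; split=> //; exists h.
exact: subset_trans W'ac (subset_trans acW WD).
Qed.

Lemma tope_step a b : a \in T -> b \in T -> dset a b != set0 ->
  exists2 e, e \in dset a b & exists2 u, u \in T & dset a u = [set e].
Proof.
move=> aT bT ab; have [W0 W0L [W0a W00 W0ab]] := face_below_dset aT bT ab.
have [e eab [W WL [Wa We]]] := face_one_zero aT W0L W0a W00 W0ab.
exists e => //; exists (vcomp W (vneg a)); first exact: vcomp_vneg_topes.
apply/setP => f; rewrite dsetE inE vcompE vnegE -zerosE We in_set1.
case: (f =P e) => [-> | /eqP fe] /=; first by rewrite eq_sym sneg_neq ?(topes_full aT).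
by rewrite (vleP _ _ Wa) ?eqxx // -zerosE We in_set1.
Qed.

Lemma tope_path a b : a \in T -> b \in T ->
  exists p, [/\ path (tadj T) a p, last a p = b & size p = #|dset a b|].
Proof.
move=> aT bT; have [n] := ubnP #|dset a b|; elim: n => // n IH in a aT *.
rewrite ltnS => abn; case: (eqVneq (dset a b) set0) => [ab0|ab].
  exists [::]; split; rewrite ?ab0 ?cards0 //=; apply/ffunP => e.
  by apply/eqP; apply: contraT; rewrite -dsetE ab0 inE.
have [e eab [u uT au]] := tope_step aT bT ab.
have ub : dset u b = dset a b :\ e.
  by apply: dset_neighbor; rewrite ?(topes_full aT) ?(topes_full uT) ?(topes_full bT).
have [p [up pb psize]] : exists p, [/\ path (tadj T) u p, last u p = b & size p = #|dset u b|].
  by apply: IH => //; rewrite ub; apply: leq_trans abn; rewrite (cardsD1 e (dset a b)) eab.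
exists (u :: p); split => //=.
  by rewrite up andbT /tadj aT uT -/(dset a u) au cards1.
by rewrite psize ub (cardsD1 e (dset a b)) eab.
Qed.

Lemma simple_topes_exist : L != set0 -> T != set0.
Proof.
move=> L0; apply: topes_exist => // e.
by have [X XL Xe] := simple_L.1 e sPlus; exists X; rewrite ?Xe.
Qed.

Lemma shortest_dset x p : x \in T -> shortest T x p -> size p <= #|dset x (last x p)|.
Proof.
move=> xT [xp pmin]; have [q [xq qp <-]] := tope_path xT (last_tadj_path xT xp).
exact: pmin.
Qed.

Lemma shortest_between x p y e : x \in T -> shortest T x p -> y \in p ->
  x e = last x p e -> y e = x e.
Proof. by move=> xT xp; apply: tadj_path_between xp.1 (shortest_dset xT xp). Qed.

Lemma tope_geodesic x y z : x \in T -> y \in T -> z \in T ->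
  (forall e, x e = y e -> z e = x e) ->
  exists p, [/\ shortest T x p, last x p = y & z \in x :: p].
Proof.
move=> xT yT zT zxy; have [p [xp pz psize]] := tope_path xT zT.
have [q [zq qy qsize]] := tope_path zT yT.
exists (p ++ q); rewrite last_cat pz; split=> //.
  apply: shortest_tadj; first by rewrite cat_path xp pz.
  rewrite last_cat pz qy size_cat psize qsize.
  exact: card_dset_between (topes_full xT) (topes_full yT) (topes_full zT) zxy.
by have := mem_last x p; rewrite pz !in_cons mem_cat orbA => ->.
Qed.

Lemma convex_between H x y z : convex T H -> x \in H -> y \in H -> z \in T ->
  (forall e, x e = y e -> z e = x e) -> z \in H.
Proof.
move=> [/subsetP HT Hconv] xH yH zT zxy.
have [p [xp py zp]] := tope_geodesic (HT _ xH) (HT _ yH) zT zxy.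
have /allP pH : all (mem H) p by apply: Hconv xp => //; rewrite py.
by move: zp; rewrite in_cons => /predU1P [-> | /pH].
Qed.

Lemma face_convex X : convex T (face L X).
Proof.
split=> [|x p xX lX xp]; first exact: face_sub.
have xT := face_topes xX; apply/allP => y yp; apply/faceP.
split; first exact: tadj_path_mem xp.1 yp.
apply/vleP => e Xe; rewrite (shortest_between xT xp yp) ?(face_eq xX Xe) //.
by rewrite (face_eq lX Xe).
Qed.

Lemma face_neq0 X : X \in L -> face L X != set0.
Proof.
move=> XL; have L0 : L != set0 by apply/set0Pn; exists X.
have [t tT] := set0Pn _ (simple_topes_exist L0).
have tX := vcomp_face FS_L XL tT; by apply/set0Pn; exists (vcomp X t).
Qed.

Lemma face_antipodal X : X \in L -> antipodal T (face L X).
Proof.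
move=> XL; split; [exact: face_sub | exact: face_neq0 |].
move=> x xX; have xT := face_topes xX; exists (vcomp X (vneg x)).
have yX := vcomp_vneg_face FS_L XL xT.
split=> //; split; first exact: face_convex.
  by apply/subsetP => t /set2P [] ->.
move=> H' H'conv /subsetP H'xy; apply/subsetP => z zX.
apply: (convex_between H'conv (H'xy _ (set21 _ _)) (H'xy _ (set22 _ _)) (face_topes zX)).
move=> e; rewrite vcompE vnegE; case: (eqVneq (X e) sZero) => [_|Xe] /= xe.
  by move: (sneg_neq (topes_full xT e)); rewrite -xe eqxx.
by rewrite (face_eq zX Xe) (face_eq xX Xe).
Qed.

Lemma face_gated X : X \in L -> gated T (face L X).
Proof.
move=> XL; split=> [|t tT]; first exact: face_sub.
have gX := vcomp_face FS_L XL tT; exists (vcomp X t) => // y yX.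
have [|p [tp py gp]] := tope_geodesic tT (face_topes yX) (vcomp_topes FS_L XL tT).
  move=> e ty; rewrite vcompE; case: (eqVneq (X e) sZero) => //= Xe.
  by rewrite ty (face_eq yX Xe).
by exists p.
Qed.

Lemma XG_face X : X \in L -> XG (face L X) = X.
Proof.
move=> XL; have [t tX] := set0Pn _ (face_neq0 XL); have tT := face_topes tX.
apply/ffunP => e; case: (eqVneq (X e) sZero) => [Xe|Xe].
  have [t1 t2] := (vcomp_face FS_L XL tT, vcomp_vneg_face FS_L XL tT).
  case: (eqVneq (XG (face L X) e) sZero) => [->|XGe]; first by rewrite Xe.
  exfalso.
  have := vleP _ _ (XG_vle t2) e XGe; have := vleP _ _ (XG_vle t1) e XGe.
  rewrite !vcompE vnegE Xe /= => <- /eqP.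
  by rewrite (negbTE (sneg_neq (topes_full tT e))).
rewrite (XG_const tX) ?(topes_full tT) ?(face_eq tX Xe) //.
by move=> u uX; rewrite (face_eq uX Xe).
Qed.

(* The halfspace of topes agreeing with [x] at [e] is the face of a vector with
   support [e], hence convex; by minimality of the convex hull it contains [H]. *)
Lemma antipode_eq H x y e : antipode T H x y -> x e = y e -> {in H, forall t, t e = x e}.
Proof.
move=> [yH [[/subsetP HT _] /subsetP xyH Hmin]] xy.
have xH : x \in H by apply: xyH; rewrite set21.
have xT := HT _ xH.
pose U : svec E := [ffun f => if f == e then x e else sZero].
have Ue : U e = x e by rewrite ffunE eqxx.
have faceU t : t \in T -> t e = x e -> t \in face L U.
  move=> tT te; apply/faceP; split=> //; apply/vleP => f; rewrite ffunE.
  by case: (f =P e) => [-> _|].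
have /subsetP HU : H \subset face L U.
  apply: Hmin; first exact: face_convex.
  by apply/subsetP => t /set2P [] ->; apply: faceU; rewrite ?HT ?xy.
by move=> t /HU tU; rewrite -Ue (face_eq tU) // Ue (topes_full xT).
Qed.

Section Antipodal.
Variable H : {set svec E}.
Hypothesis H_antipodal : antipodal T H.

Lemma antipodal_topes t : t \in H -> t \in T.
Proof. by case: H_antipodal => /subsetP HT _ _ /HT. Qed.

Lemma XG_antipode x y e : x \in H -> antipode T H x y -> x e = y e -> XG H e = x e.
Proof.
move=> xH xy xye; apply: XG_const => //; last exact: antipode_eq xy xye.
exact: topes_full (antipodal_topes xH) e.
Qed.

Lemma antipode_vcomp x y : x \in H -> antipode T H x y -> y = vcomp (XG H) (vneg x).
Proof.
move=> xH xy; apply/ffunP => e; rewrite vcompE vnegE.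
case: (eqVneq (XG H e) sZero) => [XGe|XGe] /=; last by rewrite (vleP _ _ (XG_vle xy.1)).
have xT := antipodal_topes xH; have yT := antipodal_topes xy.1.
apply: neq_sneg (topes_full xT e) (topes_full yT e) _.
apply/eqP => xye; move: (topes_full xT e).
by rewrite -(XG_antipode xH xy xye) XGe.
Qed.

Lemma antipodal_faceE : H = face L (XG H).
Proof.
have [_ /set0Pn [x0 x0H] anti] := H_antipodal.
have [y0 x0y0] := anti x0 x0H.
apply/eqP; rewrite eqEsubset; apply/andP; split; apply/subsetP => t.
  by move=> tH; apply/faceP; split; [apply: antipodal_topes | apply: XG_vle].
move=> tX; have [y0H [conv_H x0y0H _]] := x0y0.
apply: (convex_between conv_H x0H y0H (face_topes tX)) => e xye.
have XGe := XG_antipode x0H x0y0 xye.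
by rewrite (face_eq tX) XGe // (topes_full (antipodal_topes x0H)).
Qed.

Lemma antipodal_XG_mem : XG H \in L.
Proof.
have [_ H0 anti] := H_antipodal.
apply: (mem_of_face FS_L SE_L); rewrite -antipodal_faceE //.
move=> t tH; have [y ty] := anti t tH; rewrite -(antipode_vcomp tH ty).
exact/topes_mem/antipodal_topes/ty.1.
Qed.

End Antipodal.

Lemma LG_topes : L != set0 -> L = LG T.
Proof.
move=> L0; apply/setP => X; rewrite inE; apply/idP/idP => [XL|/forall_inP XT].
  by apply/forall_inP => t tT; apply: vcomp_vneg_topes.
apply: (mem_of_face FS_L SE_L) => [|t /face_topes tT]; last exact: topes_mem (XT t tT).
have [t0 t0T] := set0Pn _ (simple_topes_exist L0).
apply/set0Pn; exists (vcomp X (vneg t0)); apply/faceP.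
by split; [apply: XT | apply: vle_vcomp].
Qed.

End TopeGraph.

Theorem mainTheorem2 (E : finType) (L : {set svec E}) :
  0 < #|E| ->
  COM L -> simple L ->
  let T := topes L in
  [/\ (forall X, X \in L <-> exists H, antipodal T H /\ X = XG H),
      (forall X, X \in L <-> exists H, [/\ antipodal T H, gated T H & X = XG H]),
      L = LG T &
      (forall H, antipodal T H -> gated T H)].
Proof.
move=> _ [L0 [FS_L SE_L]] simple_L T.
have XG_mem := antipodal_XG_mem FS_L SE_L simple_L.
have anti_gated H : antipodal T H -> gated T H.
  move=> HA; rewrite (antipodal_faceE FS_L SE_L simple_L HA).
  exact: face_gated (XG_mem H HA).
have face_of X : X \in L ->
    [/\ antipodal T (face L X), gated T (face L X) & X = XG (face L X)].
  by move=> XL; rewrite XG_face //; split=> //; [apply: face_antipodal | apply: face_gated].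
split=> // [X|X|]; last exact: LG_topes.
- split=> [/face_of [A _ ->]|[H [A ->]]]; [by exists (face L X) | exact: XG_mem].
- split=> [/face_of [A G ->]|[H [A _ ->]]]; [by exists (face L X) | exact: XG_mem].
Qed.
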